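(* Let $F\ge1$, $N_{\max}\ge1$. Consider finite sets $A=\{(s_j,x_j,E_j)\}$ of triples with $s_j\in\mathbb{R}^F$, $x_j\in\mathbb{R}^{1\times3}$, $E_j\in\mathbb{R}^{3\times 3}$, with $|A|\le N_{\max}$ and with the $x_j$ pairwise distinct within $A$; write $\pi(A)=\{(s_j,x_j):(s_j,x_j,E_j)\in A\}$. There exist an integer $D$, a function $\varphi:\mathbb{R}^{3+9+F}\to\mathbb{R}^D$ and a function $\rho$ on $\mathbb{R}^D$ such that for every invertible $E\in\mathbb{R}^{3\times3}$ and all such sets $A,A'$, $$\rho\Big(\sum_{(s,x,E')\in A}\varphi\big(\mathrm{Concatenate}(xE^T,\,E'E^T,\,s)\big)\Big)=\rho\Big(\sum_{(s,x,E')\in A'}\varphi\big(\mathrm{Concatenate}(xE^T,\,E'E^T,\,s)\big)\Big)$$ implies $\pi(A)=\pi(A')$.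
   Context: $\mathrm{Concatenate}(xE^T,E'E^T,s)$ denotes the concatenation of the entries of $xE^T\in\mathbb{R}^{1\times 3}$, of the flattened matrix $E'E^T\in\mathbb{R}^{3\times 3}$ (the projection of the neighbour frame $E'$ onto the center frame $E$), and of $s\in\mathbb{R}^F$. *)

From HB Require Import structures.
From mathcomp Require Import all_boot all_order all_algebra.
From mathcomp Require Import reals.
Set Implicit Arguments. Unset Strict Implicit. Unset Printing Implicit Defensive.
Import Order.TTheory GRing.Theory Num.Theory.
Local Open Scope ring_scope.

Definition triple (R : realType) (F : nat) : Type :=
  ('rV[R]_F * 'rV[R]_3 * 'M[R]_3)%type.

Definition tr_s (R : realType) (F : nat) (t : triple R F) : 'rV[R]_F := t.1.1.
Definition tr_x (R : realType) (F : nat) (t : triple R F) : 'rV[R]_3 := t.1.2.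
Definition tr_E (R : realType) (F : nat) (t : triple R F) : 'M[R]_3 := t.2.

Definition tr_pi (R : realType) (F : nat) (t : triple R F) : ('rV[R]_F * 'rV[R]_3)%type :=
  (tr_s t, tr_x t).

Definition concatenate (R : realType) (F : nat) (E : 'M[R]_3) (t : triple R F) : 'rV[R]_(3 + 9 + F) :=
  row_mx (tr_x t *m E^T) (row_mx (mxvec (tr_E t *m E^T)) (tr_s t)).

(* A finite set of triples, represented by a duplicate-free list, with
   pairwise distinct positions x_j and at most Nmax elements. *)
Definition admissible (R : realType) (F : nat) (Nmax : nat) (A : seq (triple R F)) : Prop :=
  uniq (map (@tr_x R F) A) /\ (size A <= Nmax)%N.

(** Take for [phi] the vector of all monomials of degree at most [M] in the
    coordinates, and [rho = id].  A product of [M] affine forms is a linear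
    combination of these monomials, and for any [u] and at most [M] further
    points it can be chosen equal to [1] at [u] and [0] at the others.  That
    linear combination, applied to the summed features, counts the occurrences
    of [u]; in characteristic zero the sum therefore determines a multiset of
    at most [M] points.  Finally, for invertible [E], [(s, x)] is read back
    from [concatenate E (s, x, E')]. *)

From HB Require Import structures.
From mathcomp Require Import all_boot all_order all_algebra.
From mathcomp Require Import reals.
Import Order.TTheory GRing.Theory Num.Theory.
Set Implicit Arguments. Unset Strict Implicit. Unset Printing Implicit Defensive.
Local Open Scope ring_scope.

Lemma sum_delta (R : pzSemiRingType) (m : nat) (a : 'I_m) (x : R) (g : 'I_m -> R) :
  \sum_j (j == a)%:R * x * g j = x * g a.
Proof.
rewrite (bigD1 a) //= eqxx mul1r big1 ?addr0 // => j /negbTE ->.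
by rewrite !mul0r.
Qed.

Section Monomials.

Variables (R : comNzRingType) (n : nat).

(* Appending a constant coordinate [1] makes the monomials of degree [M] in
   [hcoord v] exactly the monomials of degree at most [M] in [v]. *)
Definition hcoord (v : 'rV[R]_n) (j : 'I_n.+1) : R :=
  if unlift ord_max j is Some k then v 0 k else 1.

Lemma hcoord_lift (v : 'rV[R]_n) k : hcoord v (lift ord_max k) = v 0 k.
Proof. by rewrite /hcoord liftK. Qed.

Lemma hcoord_max (v : 'rV[R]_n) : hcoord v ord_max = 1.
Proof. by rewrite /hcoord unlift_none. Qed.

Definition nmonomials (M : nat) : nat := #|{ffun 'I_M -> 'I_n.+1}|.

Definition monomial_word (M : nat) (k : 'I_(nmonomials M)) : {ffun 'I_M -> 'I_n.+1} :=
  enum_val k.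

Definition monomial_features (M : nat) (v : 'rV[R]_n) : 'rV[R]_(nmonomials M) :=
  \row_k \prod_i hcoord v (monomial_word k i).

Definition affine_form (w : 'I_n.+1 -> R) (v : 'rV[R]_n) : R :=
  \sum_j w j * hcoord v j.

Lemma prod_affine_form_features (M : nat) (w : 'I_M -> 'I_n.+1 -> R) :
  exists c : 'rV[R]_(nmonomials M), forall v,
    \sum_k c 0 k * monomial_features M v 0 k = \prod_i affine_form (w i) v.
Proof.
exists (\row_k \prod_i w i (monomial_word k i)) => v.
rewrite bigA_distr_bigA /= [RHS](big_enum_val (A := predT)) /=.
by apply: eq_bigr => k _; rewrite !mxE -big_split.
Qed.

End Monomials.

Section Separation.

Variables (R : fieldType) (n : nat).

Definition separating_form (u0 u : 'rV[R]_n) : 'I_n.+1 -> R :=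
  if [pick k | u 0 k != u0 0 k] is Some k then
    fun j => (j == lift ord_max k)%:R * (u0 0 k - u 0 k)^-1
           + (j == ord_max)%:R * - (u 0 k / (u0 0 k - u 0 k))
  else fun j => (j == ord_max)%:R * 1.

Lemma separating_form_center (u0 u : 'rV[R]_n) :
  affine_form (separating_form u0 u) u0 = 1.
Proof.
rewrite /affine_form /separating_form; case: pickP => [k neq_k|_].
  under eq_bigr do rewrite mulrDl.
  rewrite big_split /= !sum_delta hcoord_lift hcoord_max mulr1.
  by rewrite mulrC -mulrBl divff // subr_eq0 eq_sym.
by rewrite sum_delta hcoord_max mulr1.
Qed.

Lemma separating_form_eq0 (u0 u : 'rV[R]_n) :
  u != u0 -> affine_form (separating_form u0 u) u = 0.
Proof.
move=> /eqP neq_u; rewrite /affine_form /separating_form.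
case: pickP => [k _|eq_u].
  under eq_bigr do rewrite mulrDl.
  rewrite big_split /= !sum_delta hcoord_lift hcoord_max mulr1.
  by rewrite mulrC subrr.
exfalso; apply: neq_u; apply/rowP => k.
by apply/eqP; move/negbT: (eq_u k); rewrite negbK.
Qed.

Lemma exists_prod_affine_indicator (M : nat) (u0 : 'rV[R]_n) (V : seq 'rV[R]_n) :
  (size V <= M)%N -> exists w : 'I_M -> 'I_n.+1 -> R,
    forall u, u \in u0 :: V -> \prod_i affine_form (w i) u = (u == u0)%:R.
Proof.
move=> size_V; exists (fun i => separating_form u0 (nth u0 V i)) => u.
case: (eqVneq u u0) => [-> _|neq_u].
  by rewrite big1 // => i _; rewrite separating_form_center.
rewrite inE (negbTE neq_u) /= => V_u.
have lt_uM : (index u V < M)%N by apply: leq_trans size_V; rewrite index_mem.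
by rewrite (bigD1 (Ordinal lt_uM)) //= nth_index // separating_form_eq0 ?mul0r.
Qed.

End Separation.

Lemma sum_features_perm_eq (R : numFieldType) (n M : nat) (V V' : seq 'rV[R]_n) :
  (size V + size V' <= M)%N ->
  \sum_(u <- V) monomial_features M u = \sum_(u <- V') monomial_features M u ->
  perm_eq V V'.
Proof.
move=> size_VV' eq_sum; apply/allP => u0 _ /=.
have size_cat : (size (V ++ V') <= M)%N by rewrite size_cat.
have [w indicator_w] := exists_prod_affine_indicator u0 size_cat.
have [c features_c] := prod_affine_form_features w.
have count_from_sum B : {subset B <= V ++ V'} ->
    \sum_k c 0 k * (\sum_(u <- B) monomial_features M u) 0 k =
    (count_mem u0 B)%:R.
  move=> sub_B; under eq_bigr do rewrite summxE mulr_sumr.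
  rewrite exchange_big /= -sum1_count natr_sum [RHS]big_mkcond /=.
  apply: eq_big_seq => u B_u; rewrite features_c indicator_w //.
    by case: (u == u0).
  by rewrite inE sub_B ?orbT.
move/(congr1 (fun y : 'rV_(nmonomials n M) => \sum_k c 0 k * y 0 k)): eq_sum.
have sub_V : {subset V <= V ++ V'} by move=> u; rewrite mem_cat => ->.
have sub_V' : {subset V' <= V ++ V'} by move=> u; rewrite mem_cat orbC => ->.
by rewrite !count_from_sum // => /eqP; rewrite eqr_nat.
Qed.

Definition decode_concatenate (R : realType) (F : nat) (E : 'M[R]_3)
    (v : 'rV[R]_(3 + (3 * 3 + F))) : ('rV[R]_F * 'rV[R]_3)%type :=
  (rsubmx (rsubmx v), lsubmx v *m invmx E^T).

Lemma concatenateK (R : realType) (F : nat) (E : 'M[R]_3) (t : triple R F) :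
  E \in unitmx -> decode_concatenate E (concatenate E t) = tr_pi t.
Proof.
move=> unit_E; rewrite /decode_concatenate /concatenate !row_mxKr row_mxKl.
by rewrite mulmxK ?unitmx_tr.
Qed.

Theorem proposition5 (R : realType) (F Nmax : nat) :
  (1 <= F)%N -> (1 <= Nmax)%N ->
  exists (D D' : nat) (phi : 'rV[R]_(3 + 9 + F) -> 'rV[R]_D)
         (rho : 'rV[R]_D -> 'rV[R]_D'),
    forall (E : 'M[R]_3) (A A' : seq (triple R F)),
      E \in unitmx -> admissible Nmax A -> admissible Nmax A' ->
      rho (\sum_(t <- A) phi (concatenate E t)) =
      rho (\sum_(t <- A') phi (concatenate E t)) ->
      map (@tr_pi R F) A =i map (@tr_pi R F) A'.
Proof.
move=> _ _; exists (nmonomials (3 + 9 + F) (Nmax + Nmax)), _,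
  (@monomial_features R (3 + 9 + F) (Nmax + Nmax)), id.
move=> E A A' unit_E [_ size_A] [_ size_A'] /= eq_sum.
have perm_conc : perm_eq (map (concatenate E) A) (map (concatenate E) A').
  apply: (sum_features_perm_eq (M := Nmax + Nmax)); last by rewrite !big_map.
  by rewrite !size_map; apply: leq_add.
have decode_map B :
    map (@tr_pi R F) B = map (decode_concatenate E) (map (concatenate E) B).
  by rewrite -map_comp; apply: eq_map => t /=; rewrite concatenateK.
by rewrite !decode_map; apply/perm_mem/perm_map.
Qed.
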